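(* Let $S$ be a numerical semigroup with Frobenius number $F$ and $\mathrm{l}(S)\ge 2$. Then $\mathrm{h}(S)$ is defined, $S\cup\{\mathrm{h}(S)\}$ is a numerical semigroup with Frobenius number $F$, and $\mathrm{l}(S\cup\{\mathrm{h}(S)\})=\mathrm{l}(S)-2$.
   Context: A numerical semigroup is a subset $S\subseteq\mathbb{N}$ closed under addition with $0\in S$ and $\mathbb{N}\setminus S$ finite; $\mathrm{F}(S)=\max(\mathbb{Z}\setminus S)$. $\mathrm{N}(S)=\{s\in S\mid s<\mathrm{F}(S)\}$, $\mathrm{L}(S)=\{x\in\mathbb{N}\setminus S\mid \mathrm{F}(S)-x\notin \mathrm{N}(S)\}$, $\mathrm{l}(S)=\#\mathrm{L}(S)$. For a numerical semigroup $S$ with $\mathrm{l}(S)\ge2$, $\mathrm{h}(S)=\max\{x\in\mathbb{N}\setminus S\mid \mathrm{F}(S)-x\in\mathbb{N}\setminus S,\ x\ne \mathrm{F}(S)/2\}$ (which equals $\max\mathrm{L}(S)$). *)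

From mathcomp Require Import all_boot.
Set Implicit Arguments. Unset Strict Implicit. Unset Printing Implicit Defensive.

Definition numerical_semigroup (S : pred nat) : Prop :=
  [/\ 0 \in S,
      (forall a b, a \in S -> b \in S -> a + b \in S) &
      (exists N, forall n, N <= n -> n \in S)].

(* F is the Frobenius number max(Z \ S), in the case where it is a natural
   number (i.e. S <> N): F is a gap and every integer > F lies in S. *)
Definition is_frobenius (S : pred nat) (F : nat) : Prop :=
  F \notin S /\ forall n, F < n -> n \in S.

Definition inN (S : pred nat) (F s : nat) : bool := (s \in S) && (s < F).

(* L(S) = {x in N \ S | F - x notin N(S)}; all gaps are <= F, so we
   enumerate x in [0, F]. Note x <= F, so F - x is an honest difference. *)
Definition Lset (S : pred nat) (F : nat) : seq nat :=
  [seq x <- iota 0 F.+1 | (x \notin S) && ~~ inN S F (F - x)].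

Definition lnum (S : pred nat) (F : nat) : nat := size (Lset S F).

(* h is h(S) = max{x in N \ S | F - x in N \ S, x <> F/2}.
   (F - x in N \ S forces x <= F; "x <> F/2" is written 2x <> F.) *)
Definition is_h (S : pred nat) (F h : nat) : Prop :=
  [/\ h \notin S, h <= F, F - h \notin S, h.*2 != F &
      forall y, y \notin S -> y <= F -> F - y \notin S -> y.*2 != F -> y <= h].

Definition add_elt (S : pred nat) (h : nat) : pred nat :=
  fun n => (n \in S) || (n == h).

From mathcomp Require Import all_boot zify.

Set Implicit Arguments.
Unset Strict Implicit.

(* The gaps x <= F with F - x also a gap, other than F/2, come in pairs
   {x, F - x}; they are exactly the elements of L(S) other than F/2, so
   l(S) >= 2 guarantees one exists and h = h(S) is well defined, with
   F - h < h.  For s in S, s > 0, the number h + s cannot be a gap: it would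
   be a larger such symmetric gap, since F - h = (F - h - s) + s.  Hence
   S u {h} is closed under addition, and passing to it removes exactly the
   pair {h, F - h} from L. *)

Lemma size_filter_neq2 (T : eqType) (s : seq T) (a b : T) :
  uniq s -> a \in s -> b \in s -> a != b ->
  size [seq x <- s | (x != a) && (x != b)] = size s - 2.
Proof.
move=> s_uniq as_ bs ab.
rewrite (eq_filter (a2 := predI (predC1 b) (predC1 a))); last first.
  by move=> x /=; rewrite andbC.
rewrite filter_predI -!rem_filter ?rem_uniq //.
by rewrite size_rem ?size_rem ?subn2 // rem_mem // eq_sym.
Qed.

Lemma in_add_elt (S : pred nat) h n : (n \in add_elt S h) = (n \in S) || (n == h).
Proof. by rewrite unfold_in. Qed.

Section AddElement.

Variables (S : pred nat) (F h : nat).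

Lemma numerical_semigroup_add_elt :
  numerical_semigroup S ->
  (forall s, s \in S -> 0 < s -> h + s \in S) -> h.*2 \in S ->
  numerical_semigroup (add_elt S h).
Proof.
move=> [S0 Sadd [N SN]] hS h2S; split.
- by rewrite in_add_elt S0.
- have h_add s : s \in S -> h + s \in add_elt S h.
    move=> sS; rewrite in_add_elt; case: (posnP s) => [->|s_gt0].
      by rewrite addn0 eqxx orbT.
    by rewrite hS.
  move=> a b; rewrite !in_add_elt => /orP[aS|/eqP->] /orP[bS|/eqP->].
  + by rewrite Sadd.
  + by rewrite addnC -in_add_elt h_add.
  + by rewrite -in_add_elt h_add.
  + by rewrite addnn h2S.
- by exists N => n /SN nS; rewrite in_add_elt nS.
Qed.

Lemma is_frobenius_add_elt :
  is_frobenius S F -> h != F -> is_frobenius (add_elt S h) F.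
Proof.
move=> [FS Fgt] hF; split; first by rewrite in_add_elt negb_or FS eq_sym.
by move=> n /Fgt nS; rewrite in_add_elt nS.
Qed.

End AddElement.

Lemma Lset_uniq S F : uniq (Lset S F).
Proof. by rewrite filter_uniq // iota_uniq. Qed.

(* Membership of 0 is what removes the condition F - x < F hidden in N(S). *)
Lemma mem_Lset S F x : 0 \in S ->
  (x \in Lset S F) = [&& x \notin S, x <= F & F - x \notin S].
Proof.
move=> S0; rewrite mem_filter mem_iota add0n ltnS /inN.
case: (posnP x) => [->|x_gt0]; first by rewrite S0.
case: (leqP x F) => xF; last by rewrite !andbF.
have -> : F - x < F by lia.
by case: (x \in S); case: (F - x \in S); rewrite /= ?andbT ?andbF.
Qed.

Lemma Lset_add_elt S F h : 0 \in S -> h <= F ->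
  Lset (add_elt S h) F = [seq x <- Lset S F | (x != h) && (x != F - h)].
Proof.
move=> S0 hF; apply: (irr_sorted_eq ltn_trans ltnn).
- by rewrite sorted_filter ?iota_ltn_sorted //; apply: ltn_trans.
- by rewrite !sorted_filter ?iota_ltn_sorted //; apply: ltn_trans.
move=> x; rewrite mem_filter !mem_Lset ?in_add_elt ?S0 //.
rewrite !negb_or.
case: (leqP x F) => xF; last by rewrite !andbF.
have -> : (F - x == h) = (x == F - h) by apply/eqP/eqP; lia.
by case: (x \in S); case: (x == h); case: (x == F - h); case: (F - x \in S).
Qed.

Section SymmetricGaps.

Variables (S : pred nat) (F : nat).

Definition symmetric_gap y : bool :=
  [&& y \notin S, y <= F, F - y \notin S & y.*2 != F].

Lemma exists_symmetric_gap : 0 \in S -> 2 <= lnum S F -> exists y, symmetric_gap y.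
Proof.
move=> S0 l_ge2.
have /hasP[y yL y2] : has (fun x => x.*2 != F) (Lset S F).
  apply: contraLR l_ge2 => /hasPn none; rewrite -ltnNge ltnS.
  apply: (@uniq_leq_size _ _ [:: F./2] (Lset_uniq S F)) => x xL.
  by move/negbNE/eqP: (none x xL) => <-; rewrite inE doubleK.
by exists y; move: yL; rewrite /symmetric_gap mem_Lset // y2 andbT.
Qed.

Lemma exists_is_h : 0 \in S -> 2 <= lnum S F -> exists h, is_h S F h.
Proof.
move=> S0 /(exists_symmetric_gap S0) gap.
have gap_le y : symmetric_gap y -> y <= F by case/and4P.
have [h /and4P[hS hF hFS h2] hmax] := ex_maxnP gap gap_le.
exists h; split=> // y yS yF yFS y2; apply: hmax.
by rewrite /symmetric_gap yS yF yFS y2.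
Qed.

Section MaximalSymmetricGap.

Variable h : nat.
Hypothesis hh : is_h S F h.

Lemma is_h_double_gt : F < h.*2.
Proof.
have [hS hF hFS h2 hmax] := hh.
have : F - h <= h by apply: hmax; rewrite ?leq_subr ?subKn //; lia.
lia.
Qed.

Lemma is_h_lt : 0 \in S -> h < F.
Proof.
move=> S0; have [_ hF hFS _ _] := hh; rewrite ltn_neqAle hF andbT.
by apply: contraNneq hFS => ->; rewrite subnn.
Qed.

Lemma is_h_add (Sadd : forall a b, a \in S -> b \in S -> a + b \in S)
  (Fgt : forall n, F < n -> n \in S) s :
  s \in S -> 0 < s -> h + s \in S.
Proof.
have [_ hF hFS _ hmax] := hh; have h2F := is_h_double_gt.
move=> sS s_gt0; apply: contraT => hsS.
have hsF : h + s <= F by rewrite leqNgt; apply: contra hsS; exact: Fgt.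
suff : h + s <= h by lia.
apply: hmax => //; last by apply/eqP; lia.
apply: contra hFS => FhsS.
have -> : F - h = F - (h + s) + s by lia.
exact: Sadd.
Qed.

End MaximalSymmetricGap.

End SymmetricGaps.

Theorem lemma9 (S : pred nat) (F : nat) :
  numerical_semigroup S -> is_frobenius S F -> 2 <= lnum S F ->
  exists h : nat,
    [/\ is_h S F h,
        numerical_semigroup (add_elt S h),
        is_frobenius (add_elt S h) F &
        lnum (add_elt S h) F = lnum S F - 2].
Proof.
move=> Ssg Sfrob l_ge2; have [S0 Sadd _] := Ssg; have [_ Fgt] := Sfrob.
have [h hh] := exists_is_h S0 l_ge2; have [hS hF hFS _ _] := hh.
have h_lt := is_h_lt hh S0; have h2F := is_h_double_gt hh.
exists h; split=> //.
- apply: numerical_semigroup_add_elt => //.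
  + exact: is_h_add hh Sadd Fgt.
  + exact: Fgt.
- by apply: is_frobenius_add_elt => //; rewrite neq_ltn h_lt.
- rewrite /lnum Lset_add_elt // size_filter_neq2 ?Lset_uniq ?mem_Lset //.
  + by rewrite hS hF.
  + by rewrite leq_subr hFS subKn.
  + by apply/eqP; lia.
Qed.
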